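(* Let $P$ be a positive opetope and $I$ the one-dimensional positive opetope. The $\iota$-maps $P\to I$ that are surjective on faces are in bijective correspondence with the $1$-faces of $P$ lying in $P_1-\gamma(P_2)$.
   Context: A positive hypergraph $S$ consists of finite sets $S_k$ ($k\in\mathbb{N}$), only finitely many nonempty, functions $\gamma:S_{k+1}\to S_k$, and for each $k$ an assignment $\delta$ sending each $a\in S_{k+1}$ to a nonempty subset $\delta(a)\subseteq S_k$, with $\delta(a)$ a singleton for $a\in S_1$. A face is identified with its singleton; $\gamma(X)=\{\gamma(a):a\in X\}$, $\delta(X)=\bigcup_{a\in X}\delta(a)$. For $k>0$ the lower order $<^-$ on $S_k$ is the transitive closure of: $a\lhd b$ iff $\gamma(a)\in\delta(b)$. The upper order $<^+$ on $S_k$ is the transitive closure of: $a\lhd b$ iff there is $\alpha\in S_{k+1}$ with $a\in\delta(\alpha)$, $\gamma(\alpha)=b$; $a\perp^{\pm}b$ iff $a<^{\pm}b$ or $b<^{\pm}a$. A positive opetopic cardinal: $S_0\ne\emptyset$; globularity ($\gamma\gamma(a)=\gamma\delta(a)-\delta\delta(a)$, $\delta\gamma(a)=\delta\delta(a)-\gamma\delta(a)$ for $\dim a\ge2$); each $<^+$ a strict order, linear on $S_0$; for $k>0$, $\perp^-\cap\perp^+=\emptyset$ on $S_k$; for $x\in S_{k-1}$, $\{a:\gamma(a)=x\}$ and $\{a:x\in\delta(a)\}$ linearly ordered by $<^+$. A positive opetope: additionally $|P_m-\delta(P_{m+1})|\le1$ for all $m$. $\gamma^{(k)}(p)=p$ if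 $\dim p\le k$, else $\gamma^{(k)}(p)=\gamma(\gamma^{(k+1)}(p))$. An $\iota$-map $h:Q\to P$ of positive opetopes is a function on faces with: $\dim h(q)\le\dim q$; $h(\gamma^{(k)}(q))=\gamma^{(k)}(h(q))$ for $k\ge0$, $q\in Q_{k+1}$; and, with $\ker(h)=\{q:\dim q>\dim h(q)\}$, for $q\in Q_{k+1}$: if $\dim h(q)=k+1$, $h$ restricts to a bijection $\delta(q)-\ker(h)\to\delta(h(q))$; if $\dim h(q)=k$, to a bijection $\delta(q)-\ker(h)\to\{h(q)\}$; if $\dim h(q)<k$, $\delta(q)\subseteq\ker(h)$. $I$ denotes the positive opetope with $I_0=\{-,+\}$, $I_1=\{a\}$, $\delta(a)=\{-\}$, $\gamma(a)=+$, and no other faces. *)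

From HB Require Import structures.
From mathcomp Require Import all_boot.

Set Implicit Arguments.
Unset Strict Implicit.
Unset Printing Implicit Defensive.

(* A (candidate) positive hypergraph: a finite type of faces, each with a
   dimension; gam (codomain/target) and del (domain/source set) are only
   meaningful on faces of positive dimension, all definitions below only use
   them there. *)
Record hgraph := HGraph {
  face : finType;
  dim : face -> nat;
  gam : face -> face;
  del : face -> {set face}
}.

Section Defs.
Variable S : hgraph.
Implicit Types (a b x : face S) (X : {set face S}).

Definition faces_of (k : nat) : {set face S} := [set a | dim a == k].
Definition delS X : {set face S} := \bigcup_(a in X) del a.
Definition gamS X : {set face S} := (@gam S) @: X.

Definition is_hgraph : Prop :=
  forall a, 0 < dim a ->
    [/\ dim (gam a) = (dim a).-1,
        del a != set0,
        {in del a, forall b, dim b = (dim a).-1} &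
        (dim a = 1 -> #|del a| = 1)].

Definition tclos (r : rel (face S)) : rel (face S) :=
  fun a b => [exists c, r a c && connect r c b].

Definition lower_step : rel (face S) :=
  fun a b => [&& 0 < dim a, dim a == dim b & gam a \in del b].
Definition upper_step : rel (face S) :=
  fun a b => [exists al, [&& 0 < dim al, a \in del al & gam al == b]].

Definition lt_lower := tclos lower_step.
Definition lt_upper := tclos upper_step.
Definition perp (r : rel (face S)) : rel (face S) := fun a b => r a b || r b a.

Definition globular : Prop :=
  forall a, 2 <= dim a ->
    [set gam (gam a)] = gamS (del a) :\: delS (del a) /\
    del (gam a) = delS (del a) :\: gamS (del a).

Definition is_pos_opetopic_cardinal : Prop :=
  is_hgraph /\
  (exists a, dim a = 0) /\
  globular /\
  [/\
      (* each <^+ is a strict order (transitive by construction) *)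
      (forall a, ~~ lt_upper a a),
      (forall a b, dim a = 0 -> dim b = 0 -> a != b -> perp lt_upper a b),
      (forall a b, 0 < dim a -> dim a = dim b ->
          ~~ (perp lt_lower a b && perp lt_upper a b)) &
      (forall x a b, 0 < dim a -> 0 < dim b -> gam a = x -> gam b = x ->
          a != b -> perp lt_upper a b) /\
      (forall x a b, 0 < dim a -> 0 < dim b -> x \in del a -> x \in del b ->
          a != b -> perp lt_upper a b)].

Definition is_pos_opetope : Prop :=
  is_pos_opetopic_cardinal /\
  forall m, #|faces_of m :\: delS (faces_of m.+1)| <= 1.

(* gamma^(k)(p) = p if dim p <= k, else gamma(gamma^(k+1)(p)) *)
Definition gamk (k : nat) (p : face S) : face S := iter (dim p - k) (@gam S) p.

Definition top1faces : {set face S} := faces_of 1 :\: gamS (faces_of 2).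

End Defs.

Section Iota.
Variables Q P : hgraph.

Definition ker (h : face Q -> face P) : {set face Q} :=
  [set q | dim (h q) < dim q].

Definition is_iota_map (h : face Q -> face P) : Prop :=
  [/\ (forall q, dim (h q) <= dim q),
      (forall k q, dim q = k.+1 -> h (gamk k q) = gamk k (h q)) &
      (forall k q, dim q = k.+1 ->
         [/\ dim (h q) = k.+1 ->
               {in del q :\: ker h &, injective h} /\
               h @: (del q :\: ker h) = del (h q),
             dim (h q) = k ->
               {in del q :\: ker h &, injective h} /\
               h @: (del q :\: ker h) = [set h q] &
             dim (h q) < k -> del q \subset ker h])].

End Iota.

Definition Iface : finType := 'I_3.
Definition Iminus : Iface := inord 0.
Definition Iplus : Iface := inord 1.
Definition Ia : Iface := inord 2.
Definition Idim (x : Iface) : nat := (x == Ia).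
Definition Igam (x : Iface) : Iface := if x == Ia then Iplus else x.
Definition Idel (x : Iface) : {set Iface} := if x == Ia then [set Iminus] else set0.
Definition Ihg : hgraph := @HGraph Iface Idim Igam Idel.

From HB Require Import structures.
From mathcomp Require Import all_boot zify.
From Stdlib Require Import ProofIrrelevance FunctionalExtensionality.

Set Implicit Arguments.
Unset Strict Implicit.
Unset Printing Implicit Defensive.

(* An iota-map h : P -> I is determined by the set c of vertices it sends to
   [-]: every positive-dimensional face goes where its edge gamma^(1) goes, and
   an edge goes to [a] exactly when it crosses c, i.e. leaves c along <^+.
   The set c is a down-set of the linear order <^+ on P_0, and conversely every
   down-set c defines an iota-map: by globularity and the injectivity of source
   and target on the domain of a 2-face q, the number of crossing edges in
   delta(q) is 1 if gamma(q) crosses and 0 otherwise.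
   If h is surjective, some edge crosses; descending along <^+ through the
   2-faces of which it is the target, one reaches a crossing edge a in
   P_1 - gamma(P_2).  No vertex lies strictly between the endpoints of such an
   edge, so c = {x | x <=^+ src a}, which determines a; conversely this
   down-set defines a surjective iota-map for every edge a. *)

Local Notation "x <=+ y" := (connect (@upper_step _) x y)
  (at level 70, no associativity).
Local Notation "x <+ y" := (lt_upper x y) (at level 70, no associativity).

Lemma connect_ind (T : finType) (r : rel T) (Q : T -> Prop) y :
  Q y -> (forall x z, r x z -> connect r z y -> Q z -> Q x) ->
  forall x, connect r x y -> Q x.
Proof.
move=> Qy IH x /connectP[p]; elim: p x => [|z p IHp] x /=; first by move=> _ <-.
case/andP=> r_xz p_z y_last; apply: (IH x z r_xz); last exact: IHp.
by apply/connectP; exists p.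
Qed.

Lemma strict_order_ind (T : finType) (lt : rel T) (Q : T -> Prop) :
  transitive lt -> irreflexive lt ->
  (forall x, (forall y, lt y x -> Q y) -> Q x) -> forall x, Q x.
Proof.
move=> lt_trans lt_irr IH x; have [n] := ubnP #|[set y | lt y x]|.
elim: n x => // n IHn x; rewrite ltnS => le_n; apply: IH => y lt_yx.
apply: IHn; apply: leq_trans (proper_card _) le_n; apply/properP; split.
- by apply/subsetP => z; rewrite !inE => lt_zy; apply: lt_trans lt_zy lt_yx.
- by exists y; rewrite !inE ?lt_yx ?lt_irr.
Qed.

Lemma card_imset_sep (T T' : finType) (f : T -> T') (A : {set T}) (c : pred T') :
  {in A &, injective f} -> #|[set y in f @: A | c y]| = #|[set x in A | c (f x)]|.
Proof.
move=> f_inj; rewrite -(card_in_imset (f := f)); last first.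
  by move=> x y; rewrite !inE => /andP[xA _] /andP[yA _]; apply: f_inj.
apply: eq_card => y; rewrite inE.
apply/andP/imsetP => [[/imsetP[x xA ->] cfx]|[x]]; first by exists x; rewrite ?inE ?xA.
by rewrite inE => /andP[xA cfx] ->; rewrite imset_f.
Qed.

Lemma card_sep_setD1 (T : finType) (A B : {set T}) (u : T) (c : pred T) :
  A :\: B = [set u] -> #|[set x in A | c x]| = c u + #|[set x in A :&: B | c x]|.
Proof.
move=> /setP AB; have uA : u \in A by move: (AB u); rewrite !inE eqxx => /andP[].
rewrite (cardsD1 u) inE uA /=; congr (_ + _); apply: eq_card => x; rewrite !inE.
by move: (AB x); rewrite !inE; case: (x \in A); case: (x \in B); case: (x == u).
Qed.

Section TransitiveClosure.
Variables (S : hgraph) (r : rel (face S)).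
Implicit Types x y z : face S.

Lemma tclos1 x y : r x y -> tclos r x y.
Proof. by move=> r_xy; apply/existsP; exists y; rewrite r_xy connect0. Qed.

Lemma tclosW x y : tclos r x y -> connect r x y.
Proof. by case/existsP=> z /andP[r_xz]; apply: connect_trans (connect1 r_xz). Qed.

Lemma tclos_connect_trans x y z : tclos r x y -> connect r y z -> tclos r x z.
Proof.
case/existsP=> w /andP[r_xw c_wy] c_yz; apply/existsP; exists w.
by rewrite r_xw (connect_trans c_wy c_yz).
Qed.

Lemma connect_tclosP x y : connect r x y -> x = y \/ tclos r x y.
Proof.
case/connectP=> [[|z p]] /=; first by move=> _ ->; left.
case/andP=> r_xz p_z ->; right; apply/existsP; exists z; rewrite r_xz.
by apply/connectP; exists p.
Qed.

Lemma connect_tclos_trans x y z : connect r x y -> tclos r y z -> tclos r x z.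
Proof.
by case/connect_tclosP=> [->|t_xy] // /tclosW; apply: tclos_connect_trans.
Qed.

Lemma tclos_trans : transitive (tclos r).
Proof. by move=> y x z t_xy /tclosW; apply: tclos_connect_trans. Qed.

Lemma tclos_last x y : tclos r x y -> exists z, r z y.
Proof.
case/existsP=> w /andP[r_xw /connectP[p]].
elim/last_ind: p => [_ ->|p z _] /=; first by exists x.
by rewrite rcons_path last_rcons => /andP[_ r_zy] ->; exists (last w p).
Qed.

End TransitiveClosure.

Lemma IfaceP (x : face Ihg) : [\/ x = Iminus, x = Iplus | x = Ia].
Proof.
case: x => [[|[|[|//]]] lt3]; [constructor 1|constructor 2|constructor 3];
  by apply: val_inj; rewrite /= inordK.
Qed.

Lemma IfaceF :
  ((Iminus == Iplus) = false) * ((Iplus == Iminus) = false) *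
  ((Iminus == Ia) = false) * ((Ia == Iminus) = false) *
  ((Iplus == Ia) = false) * ((Ia == Iplus) = false).
Proof. by rewrite -!val_eqE /= !inordK. Qed.

Lemma dimI (x : face Ihg) : dim x = (x == Ia).
Proof. by []. Qed.

Lemma dimI_le1 (x : face Ihg) : dim x <= 1.
Proof. exact: leq_b1. Qed.

Lemma gamkI k (x : face Ihg) :
  gamk k x = if (k == 0) && (x == Ia) then Iplus else x.
Proof.
rewrite /gamk /= /Idim; case: (x =P Ia) => [->|_]; case: k => //=.
by rewrite /Igam eqxx.
Qed.

Section Hypergraph.
Variable P : hgraph.
Hypothesis hgP : is_hgraph P.
Implicit Types (a b e p q x y z : face P) (c : pred (face P)).

Lemma dim_gam a : 0 < dim a -> dim (gam a) = (dim a).-1.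
Proof. by case/hgP. Qed.

Lemma dim_del a b : 0 < dim a -> b \in del a -> dim b = (dim a).-1.
Proof. by case/hgP=> _ _ dim_del _; apply: dim_del. Qed.

Definition src e : face P := odflt e [pick x in del e].

Lemma del_edge e : dim e = 1 -> del e = [set src e].
Proof.
move=> e1; have /hgP[_ _ _ /(_ e1) /eqP/cards1P[x del_e]] : 0 < dim e by rewrite e1.
rewrite /src del_e; case: pickP => [y|/(_ x)]; rewrite inE ?eqxx //.
by move=> /eqP->.
Qed.

Lemma src_del e : dim e = 1 -> src e \in del e.
Proof. by move=> e1; rewrite del_edge // set11. Qed.

Lemma dim_src e : dim e = 1 -> dim (src e) = 0.
Proof. by move=> e1; rewrite (dim_del _ (src_del e1)) e1. Qed.

Lemma dim_gam_edge e : dim e = 1 -> dim (gam e) = 0.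
Proof. by move=> e1; rewrite dim_gam e1. Qed.

Lemma upper_step_dim x y : upper_step x y -> dim x = dim y.
Proof.
by case/existsP=> e /and3P[e_pos x_e /eqP <-]; rewrite (dim_del e_pos x_e) dim_gam.
Qed.

Lemma connect_upper_dim x y : x <=+ y -> dim x = dim y.
Proof. by elim/connect_ind => // {}x z /upper_step_dim ->. Qed.

Lemma upper_step_vertex x y : dim x = 0 -> upper_step x y ->
  exists e, [/\ dim e = 1, src e = x & gam e = y].
Proof.
move=> x0 /existsP[e /and3P[e_pos x_e /eqP <-]]; exists e.
have e1 : dim e = 1 by move: (dim_del e_pos x_e); rewrite x0; lia.
by split=> //; move: x_e; rewrite del_edge // => /set1P.
Qed.

Lemma lt_upper_edge e : dim e = 1 -> src e <+ gam e.
Proof. by move=> e1; apply: tclos1; apply/existsP; exists e; rewrite e1 src_del ?eqxx. Qed.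

Lemma dim_iter_gam n p : n <= dim p -> dim (iter n (@gam P) p) = dim p - n.
Proof.
elim: n => [|n IH] np; first by rewrite subn0.
have dim_n : dim (iter n (@gam P) p) = dim p - n by apply: IH; lia.
by rewrite iterS dim_gam dim_n; lia.
Qed.

Lemma dim_gamk1 p : 0 < dim p -> dim (gamk 1 p) = 1.
Proof. by move=> p_pos; rewrite /gamk dim_iter_gam ?leq_subr //; lia. Qed.

Lemma gamk1_gam p : 2 <= dim p -> gamk 1 (gam p) = gamk 1 p.
Proof.
move=> p2; rewrite /gamk dim_gam; last lia.
have -> : dim p - 1 = ((dim p).-1 - 1).+1 by lia.
by rewrite iterSr.
Qed.

Lemma gamk1_edge e : dim e = 1 -> gamk 1 e = e.
Proof. by move=> e1; rewrite /gamk e1. Qed.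

Lemma gamk_pred k q : dim q = k.+1 -> gamk k q = gam q.
Proof. by move=> qk; rewrite /gamk qk subSnn. Qed.

Lemma del_edge_ker (Q : hgraph) (h : face P -> face Q) e :
  dim e = 1 -> del e :\: ker h = [set src e].
Proof.
move=> e1; rewrite del_edge //; apply/setP => x; rewrite !inE.
by case: eqP => [->|]; rewrite ?andbF // dim_src ?ltn0.
Qed.

Definition crossing c e := ~~ c (gam e) && c (src e).

Definition downward_closed c := forall e, dim e = 1 -> c (gam e) -> c (src e).

Definition cut_map c p : face Ihg :=
  if dim p == 0 then (if c p then Iminus else Iplus)
  else let e := gamk 1 p in
       if c (gam e) then Iminus else if c (src e) then Ia else Iplus.

Lemma cut_map_vertex c x : dim x = 0 -> cut_map c x = if c x then Iminus else Iplus.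
Proof. by move=> x0; rewrite /cut_map x0. Qed.

Lemma cut_map_edge c e : dim e = 1 ->
  cut_map c e = if c (gam e) then Iminus else if c (src e) then Ia else Iplus.
Proof. by move=> e1; rewrite /cut_map e1 gamk1_edge. Qed.

Lemma cut_map_gamk1 c p : 0 < dim p -> cut_map c p = cut_map c (gamk 1 p).
Proof.
move=> p_pos; rewrite [RHS]cut_map_edge ?dim_gamk1 // /cut_map.
by case: (dim p) p_pos.
Qed.

Lemma cut_map_edge_Ia c e : dim e = 1 -> (cut_map c e == Ia) = crossing c e.
Proof.
move=> e1; rewrite cut_map_edge // /crossing.
by case: (c (gam e)); case: (c (src e)); rewrite ?eqxx ?IfaceF.
Qed.

Lemma cut_map_dim c p : dim (cut_map c p) <= dim p.
Proof.
have [p0|p_pos] := posnP (dim p); last exact: leq_trans (dimI_le1 _) p_pos.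
by rewrite cut_map_vertex // p0 dimI; case: (c p); rewrite IfaceF.
Qed.

Lemma cut_map_gamk c k q : dim q = k.+1 ->
  cut_map c (gamk k q) = gamk k (cut_map c q).
Proof.
move=> qk; rewrite gamk_pred // gamkI; case: k qk => [|k] qk /=.
  rewrite cut_map_vertex ?dim_gam_edge // cut_map_edge //.
  by case: (c (gam q)); case: (c (src q)); rewrite ?eqxx ?IfaceF.
by rewrite cut_map_gamk1 ?dim_gam ?qk // gamk1_gam ?qk // -cut_map_gamk1 ?qk.
Qed.

Lemma cut_map_ext c c' p : (forall x, dim x = 0 -> c x = c' x) ->
  cut_map c p = cut_map c' p.
Proof.
move=> cc'; have [p0|p_pos] := posnP (dim p); first by rewrite !cut_map_vertex // cc'.
have e1 := dim_gamk1 p_pos.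
by rewrite !(cut_map_gamk1 _ p_pos) !cut_map_edge // !cc' ?dim_gam_edge ?dim_src.
Qed.

Section IotaMapsToI.
Variables (h : face P -> face Ihg) (h_iota : is_iota_map h).

Lemma iota_vertex x : dim x = 0 -> h x != Ia.
Proof.
by case: h_iota => h_dim _ _ x0; move: (h_dim x); rewrite x0 dimI; case: eqP.
Qed.

Lemma iota_vertex_cases x : dim x = 0 -> h x = Iminus \/ h x = Iplus.
Proof.
by move=> /iota_vertex; case: (IfaceP (h x)) => ->; rewrite ?eqxx; [left|right|].
Qed.

Lemma iota_edge_gam e : dim e = 1 -> h (gam e) = if h e == Ia then Iplus else h e.
Proof.
by case: h_iota => _ h_gamk _ e1; move: (h_gamk 0 e e1); rewrite gamk_pred // gamkI.
Qed.

Lemma iota_edge_src e : dim e = 1 -> h (src e) = if h e == Ia then Iminus else h e.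
Proof.
move=> e1; case: h_iota => _ _ /(_ 0 e e1)[to_edge to_vertex _].
rewrite del_edge_ker // imset_set1 in to_edge to_vertex.
case: eqP => [he|/eqP he].
  by move: to_edge; rewrite he /= /Idim /Idel eqxx => /(_ erefl)[_ /set1_inj].
by move: to_vertex; rewrite /= /Idim (negbTE he) => /(_ erefl)[_ /set1_inj].
Qed.

Lemma iota_gam p : 2 <= dim p -> h (gam p) = h p.
Proof.
move=> p2; case: h_iota => _ h_gamk _.
have pk : dim p = (dim p).-1.+1 by lia.
have k_pos : ((dim p).-1 == 0) = false by apply/eqP; lia.
by move: (h_gamk _ _ pk); rewrite gamk_pred // gamkI k_pos.
Qed.

Lemma iota_gamk1 p : 0 < dim p -> h (gamk 1 p) = h p.
Proof.
have [n] := ubnP (dim p); elim: n p => // n IH p; rewrite ltnS => p_n p_pos.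
case: (ltngtP (dim p) 1) => [|p2|p1]; [lia| |by rewrite gamk1_edge].
by rewrite -gamk1_gam // IH ?iota_gam ?dim_gam //; lia.
Qed.

Lemma iota_minus_down x y : dim y = 0 -> x <=+ y -> h y = Iminus -> h x = Iminus.
Proof.
move=> y0 xy hy; elim/connect_ind: x / xy => // u w uw wy hw.
have u0 : dim u = 0 by rewrite (upper_step_dim uw) (connect_upper_dim wy).
have [e [e1 <- gam_e]] := upper_step_vertex u0 uw.
by move: hw; rewrite -gam_e iota_edge_gam // iota_edge_src //; case: ifP.
Qed.

Lemma iota_plus_up x y : dim x = 0 -> x <=+ y -> h x = Iplus -> h y = Iplus.
Proof.
move=> x0 xy hx; have y0 : dim y = 0 by rewrite -(connect_upper_dim xy).
case: (iota_vertex_cases y0) => // /(iota_minus_down y0 xy).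
by rewrite hx => /eqP; rewrite IfaceF.
Qed.

Lemma iota_mapE p : h p = cut_map (fun x => h x == Iminus) p.
Proof.
have [p0|p_pos] := posnP (dim p).
  by rewrite cut_map_vertex //; case: (iota_vertex_cases p0) => ->; rewrite ?eqxx ?IfaceF.
rewrite cut_map_gamk1 // -(iota_gamk1 p_pos); have e1 := dim_gamk1 p_pos.
rewrite cut_map_edge // iota_edge_gam // iota_edge_src //.
by case: (IfaceP (h (gamk 1 p))) => ->; do 2!rewrite ?eqxx ?IfaceF /=.
Qed.

End IotaMapsToI.

Lemma top1_dim a : a \in top1faces P -> dim a = 1.
Proof. by rewrite !inE => /andP[_ /eqP]. Qed.

Lemma top1_minimal b a : a \in top1faces P -> ~~ (b <+ a).
Proof.
move=> a_top; apply/negP => /tclos_last[z /existsP[al /and3P[al_pos _ /eqP al_a]]].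
have al2 : dim al = 2 by move: (dim_gam al_pos); rewrite al_a top1_dim //; lia.
by case/setDP: a_top => _ /negP; apply; rewrite -al_a imset_f // inE al2.
Qed.

Definition cut_below a : pred (face P) := fun x => x <=+ src a.

Lemma cut_below_closed a : downward_closed (cut_below a).
Proof. by move=> e e1 ge_sa; apply: connect_trans (tclosW (lt_upper_edge e1)) ge_sa. Qed.

Section Cardinal.
Hypothesis globP : globular P.
Hypothesis lt_upper_irr : forall a : face P, ~~ (a <+ a).
Hypothesis vertex_total : forall a b : face P,
  dim a = 0 -> dim b = 0 -> a != b -> perp (@lt_upper P) a b.
Hypothesis perp_disj : forall a b : face P, 0 < dim a -> dim a = dim b ->
  ~~ (perp (@lt_lower P) a b && perp (@lt_upper P) a b).
Hypothesis gam_chain : forall x a b : face P, 0 < dim a -> 0 < dim b ->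
  gam a = x -> gam b = x -> a != b -> perp (@lt_upper P) a b.
Hypothesis del_chain : forall x a b : face P, 0 < dim a -> 0 < dim b ->
  x \in del a -> x \in del b -> a != b -> perp (@lt_upper P) a b.

Local Notation surj_iota_to_I := {h : {ffun face P -> face Ihg} |
  is_iota_map h /\ (forall y : face Ihg, exists x, h x = y)}.

Let lt_upper_trans : transitive (@lt_upper P) := @tclos_trans P _.
Let lt_upper_irrefl : irreflexive (@lt_upper P) := fun a => negbTE (lt_upper_irr a).

Lemma le_upper_anti x y : x <=+ y -> y <=+ x -> x = y.
Proof.
case/connect_tclosP => [//|xy] yx; case/negP: (lt_upper_irr x).
exact: tclos_connect_trans xy yx.
Qed.

Lemma vertex_cases x y : dim x = 0 -> dim y = 0 -> [\/ x = y, x <+ y | y <+ x].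
Proof.
move=> x0 y0; have [x_eq_y|xy] := eqVneq x y; first by constructor 1.
by case/orP: (vertex_total x0 y0 xy); [constructor 2|constructor 3].
Qed.

(* Each step z <| w of the path comes from a face b' with z in delta(b') and
   gamma(b') = w, so b <|^- b'; the path ends in delta(a). *)
Lemma upper_path_lower a y z : 0 < dim a -> y \in del a -> z <=+ y ->
  forall b, dim b = dim a -> gam b = z -> lt_lower b a.
Proof.
move=> a_pos y_a; elim/connect_ind => {z} [b b_a gb|z w].
  by apply: tclos1; rewrite /lower_step b_a a_pos eqxx gb y_a.
case/existsP=> b' /and3P[b'_pos z_b' /eqP gb'] _ IH b b_a gb.
have b'_a : dim b' = dim a.
  by move: (dim_del b'_pos z_b') (dim_gam (a := b)); rewrite gb b_a => ? /(_ a_pos); lia.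
apply: connect_tclos_trans (IH b' b'_a gb'); apply: connect1.
by rewrite /lower_step b_a b'_a a_pos eqxx gb z_b'.
Qed.

Lemma del_antichain a x y : 0 < dim a -> x \in del a -> y \in del a -> ~~ (x <+ y).
Proof.
move=> a_pos x_a y_a; apply/negP => /existsP[z /andP[x_z z_y]].
case/existsP: x_z => b /and3P[b_pos x_b /eqP gb].
have b_a : dim b = dim a by move: (dim_del b_pos x_b) (dim_del a_pos x_a); lia.
have [b_eq_a|b_neq_a] := eqVneq b a.
  have y_z : upper_step y z by apply/existsP; exists b; rewrite -gb b_eq_a a_pos y_a eqxx.
  by case/negP: (lt_upper_irr y); apply: tclos_connect_trans (tclos1 y_z) z_y.
move: (perp_disj b_pos b_a); rewrite (del_chain b_pos a_pos x_b x_a b_neq_a) andbT.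
by rewrite /perp (upper_path_lower a_pos y_a z_y b_a gb).
Qed.

Lemma del_perp_upperF q e e' : 0 < dim q -> e \in del q -> e' \in del q ->
  perp (@lt_upper P) e e' = false.
Proof. by move=> q_pos e_q e'_q; rewrite /perp !(negbTE (del_antichain q_pos _ _)). Qed.

Lemma src_inj_del q : dim q = 2 -> {in del q &, injective src}.
Proof.
move=> q2 e e' e_q e'_q same_src; have q_pos : 0 < dim q by rewrite q2.
have e1 : dim e = 1 by rewrite (dim_del q_pos e_q) q2.
have e'1 : dim e' = 1 by rewrite (dim_del q_pos e'_q) q2.
apply/eqP; apply: contraFT (del_perp_upperF q_pos e_q e'_q) => e_neq.
by apply: (del_chain (x := src e)) e_neq; rewrite ?e1 ?e'1 ?src_del // same_src src_del.
Qed.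

Lemma gam_inj_del q : 2 <= dim q -> {in del q &, injective (@gam P)}.
Proof.
move=> q2 e e' e_q e'_q same_gam; have q_pos : 0 < dim q by lia.
have e_pos : 0 < dim e by rewrite (dim_del q_pos e_q); lia.
have e'_pos : 0 < dim e' by rewrite (dim_del q_pos e'_q); lia.
apply/eqP; apply: contraFT (del_perp_upperF q_pos e_q e'_q) => e_neq.
exact: gam_chain e_pos e'_pos erefl (esym same_gam) e_neq.
Qed.

Lemma gam_del_le b e : 2 <= dim b -> e \in del b -> gam e <=+ gam (gam b).
Proof.
move=> b2; have b_pos : 0 < dim b by lia.
have [glob_gam _] := globP b2.
suff below z : forall e, e \in del b -> gam e = z -> z <=+ gam (gam b).
  by move=> e_b; apply: below e_b erefl.
elim/(strict_order_ind (lt := fun x y => y <+ x)): z => [y x z xy yz|x|z IH].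
- exact: lt_upper_trans yz xy.
- exact: lt_upper_irrefl.
move=> {}e e_b gam_e; have [->|z_neq] := eqVneq z (gam (gam b)); first exact: connect0.
have /bigcupP[e' e'_b z_e'] : z \in delS (del b).
  apply: contraNT z_neq => z_notin; rewrite -in_set1 glob_gam inE z_notin.
  by rewrite -gam_e imset_f.
have z_e'z : z <+ gam e'.
  apply: tclos1; apply/existsP; exists e'; rewrite z_e' eqxx andbT.
  by rewrite (dim_del b_pos e'_b); lia.
exact: connect_trans (tclosW z_e'z) (IH _ z_e'z e' e'_b erefl).
Qed.

Lemma lt_upper_gam e e' : 0 < dim e -> e <+ e' -> gam e <=+ gam e'.
Proof.
move=> e_pos /tclosW ee'; elim/connect_ind: e / ee' e_pos => [_|u v].
  exact: connect0.
case/existsP=> al /and3P[al_pos u_al /eqP <-] _ IH u_pos.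
have al2 : 2 <= dim al by move: (dim_del al_pos u_al); lia.
apply: connect_trans (gam_del_le al2 u_al) (IH _).
by rewrite dim_gam; lia.
Qed.

Lemma card_crossing_del c q : downward_closed c -> dim q = 2 ->
  #|[set e in del q | crossing c e]| = crossing c (gam q).
Proof.
move=> c_down q2; set E := del q.
have q_pos : 0 < dim q by rewrite q2.
have E1 e : e \in E -> dim e = 1 by move=> e_q; rewrite (dim_del q_pos e_q) q2.
have gq1 : dim (gam q) = 1 by rewrite dim_gam // q2.
have delS_E : delS E = src @: E.
  apply/setP => x; apply/bigcupP/imsetP => -[e eE x_e]; exists e => //.
    by move: x_e; rewrite del_edge ?E1 // => /set1P.
  by rewrite x_e src_del ?E1.
have [glob_gam glob_del] :
    [set gam (gam q)] = gamS E :\: src @: E /\ [set src (gam q)] = src @: E :\: gamS E.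
  by rewrite -delS_E -del_edge //; apply: globP; rewrite q2.
have := card_sep_setD1 c (esym glob_del); rewrite card_imset_sep; last exact: src_inj_del.
have := card_sep_setD1 c (esym glob_gam); rewrite card_imset_sep; last first.
  by apply: gam_inj_del; rewrite q2.
have split_src : #|[set e in E | c (gam e)]| + #|[set e in E | crossing c e]|
                  = #|[set e in E | c (src e)]|.
  rewrite -(cardsID [set e | c (gam e)] [set e in E | c (src e)]).
  congr (_ + _); apply: eq_card => e.
    rewrite !inE; case eE: (e \in E) => //=.
    by case cg: (c (gam e)); rewrite ?andbF ?andbT // (c_down _ (E1 _ eE) cg).
  by rewrite !inE /crossing; case: (e \in E); case: (c (src e)); case: (c (gam e)).
rewrite setIC [crossing c (gam q)]/crossing; move: (c_down _ gq1).
by case: (c (gam (gam q))) => [/(_ isT) ->|_] /=; lia.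
Qed.

Lemma cut_map_ker_2face c q : dim q = 2 ->
  del q :\: ker (cut_map c) = [set e in del q | crossing c e].
Proof.
move=> q2; apply/setP => e; rewrite !inE.
have [e_q|] := boolP (e \in del q); rewrite ?andbF ?andbT //.
have e1 : dim e = 1 by rewrite (dim_del _ e_q) q2.
by rewrite e1 dimI -cut_map_edge_Ia //; case: (_ == Ia).
Qed.

Lemma cut_map_iota c : downward_closed c -> is_iota_map (cut_map c).
Proof.
move=> c_down; split; [exact: cut_map_dim | exact: cut_map_gamk |].
have inj1 (x : face P) : {in [set x] &, injective (cut_map c)}.
  by move=> y z /set1P-> /set1P->.
move=> [|[|k]] q q_dim.
- rewrite del_edge_ker // imset_set1 (cut_map_vertex c (dim_src q_dim)) (cut_map_edge c q_dim).
  move: (c_down q q_dim); case: (c (gam q)) => [/(_ isT)->|_]; case: (c (src q));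
    rewrite /= /Idim /Idel ?eqxx ?IfaceF //; split=> // _; split=> //; exact: inj1.
- have q_pos : 0 < dim q by rewrite q_dim.
  have hq : (cut_map c q == Ia) = crossing c (gam q).
    by rewrite cut_map_gamk1 // gamk_pred // cut_map_edge_Ia // dim_gam q_dim.
  have := card_crossing_del c_down q_dim; rewrite -(cut_map_ker_2face c q_dim) dimI hq.
  case: (crossing c (gam q)) hq => [/eqP hq /eqP/cards1P[e0 E] | _ /cards0_eq E];
    split=> // _.
    have : e0 \in [set e in del q | crossing c e] by rewrite -cut_map_ker_2face // E set11.
    rewrite inE => /andP[e0_q e0_cross].
    rewrite E imset_set1 hq; split; first exact: inj1.
    by congr [set _]; apply/eqP; rewrite cut_map_edge_Ia // (dim_del _ e0_q) q_dim.
  apply/subsetP => e e_q; have := in_set0 e.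
  by rewrite -E inE e_q andbT => /negbFE.
- have le1 := dimI_le1 (cut_map c q).
  split=> [hq|hq|_]; [by rewrite hq in le1 | by rewrite hq in le1 |].
  apply/subsetP => e e_q; rewrite inE (dim_del _ e_q) q_dim //.
  exact: leq_ltn_trans (dimI_le1 _) _.
Qed.

Lemma top1_src_inj : {in top1faces P &, injective src}.
Proof.
move=> a a' a_top a'_top same_src; have a1 := top1_dim a_top; have a'1 := top1_dim a'_top.
apply/eqP; apply: contraT => a_neq.
have [a_pos a'_pos] : 0 < dim a /\ 0 < dim a' by rewrite a1 a'1.
have src_a' : src a \in del a' by rewrite same_src src_del.
have := del_chain a_pos a'_pos (src_del a1) src_a' a_neq.
by rewrite /perp (negbTE (top1_minimal a a'_top)) (negbTE (top1_minimal a' a_top)).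
Qed.

Lemma top1_gap a v : a \in top1faces P -> src a <+ v -> v <+ gam a -> False.
Proof.
move=> a_top /existsP[w /andP[sa_w w_v]] v_ga; have a1 := top1_dim a_top.
have [b [b1 sb gb]] := upper_step_vertex (dim_src a1) sa_w.
suff ga_w : gam a <=+ w.
  case/negP: (lt_upper_irr (gam a)).
  by apply: connect_tclos_trans v_ga; apply: connect_trans w_v.
have [<-|b_neq_a] := eqVneq b a; first by rewrite gb connect0.
have [b_pos a_pos] : 0 < dim b /\ 0 < dim a by rewrite a1 b1.
have sa_b : src a \in del b by rewrite -sb src_del.
case/orP: (del_chain b_pos a_pos sa_b (src_del a1) b_neq_a) => [b_a|a_b].
  by case/negP: (top1_minimal b a_top).
by rewrite -gb; apply: lt_upper_gam a_b.
Qed.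

Lemma gam_not_below a : dim a = 1 -> ~~ cut_below a (gam a).
Proof.
move=> a1; apply/negP => ga_sa; case/negP: (lt_upper_irr (src a)).
exact: tclos_connect_trans (lt_upper_edge a1) ga_sa.
Qed.

Lemma cut_map_below_edge a : dim a = 1 -> cut_map (cut_below a) a = Ia.
Proof.
by move=> a1; rewrite cut_map_edge // (negbTE (gam_not_below a1)) /cut_below connect0.
Qed.

Definition iota_below a : {ffun face P -> face Ihg} := [ffun p => cut_map (cut_below a) p].

Lemma iota_below_onto a : dim a = 1 ->
  is_iota_map (iota_below a) /\ (forall i : face Ihg, exists p, iota_below a p = i).
Proof.
move=> a1; have -> : fun_of_fin (iota_below a) = cut_map (cut_below a).
  exact: functional_extensionality (ffunE _).
split=> [|i]; first exact: cut_map_iota (@cut_below_closed a).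
case: (IfaceP i) => ->; [exists (src a) | exists (gam a) | exists a].
- by rewrite cut_map_vertex ?dim_src // /cut_below connect0.
- by rewrite cut_map_vertex ?dim_gam_edge // (negbTE (gam_not_below a1)).
- exact: cut_map_below_edge.
Qed.

Section TopEdge.
Variables (h : face P -> face Ihg) (h_iota : is_iota_map h).

Lemma iota_cut_top a x : a \in top1faces P -> h a = Ia -> dim x = 0 ->
  (h x == Iminus) = cut_below a x.
Proof.
move=> a_top ha x0; have a1 := top1_dim a_top.
have h_src : h (src a) = Iminus by rewrite (iota_edge_src h_iota a1) ha eqxx.
have h_gam : h (gam a) = Iplus by rewrite (iota_edge_gam h_iota a1) ha eqxx.
case x_le: (cut_below a x).
  by rewrite (iota_minus_down h_iota (dim_src a1) x_le h_src) eqxx.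
suff -> : h x = Iplus by rewrite IfaceF.
case: (vertex_cases x0 (dim_src a1)) => [x_eq|x_lt|sa_x].
- by rewrite /cut_below x_eq connect0 in x_le.
- by rewrite /cut_below (tclosW x_lt) in x_le.
case: (vertex_cases x0 (dim_gam_edge a1)) => [->|x_ga|ga_x] //.
  by case: (top1_gap a_top sa_x x_ga).
exact: (iota_plus_up h_iota (dim_gam_edge a1) (tclosW ga_x) h_gam).
Qed.

Lemma iota_top_unique a a' : a \in top1faces P -> a' \in top1faces P ->
  h a = Ia -> h a' = Ia -> a = a'.
Proof.
move=> a_top a'_top ha ha'; apply: top1_src_inj => //.
have sa0 := dim_src (top1_dim a_top); have sa'0 := dim_src (top1_dim a'_top).
apply: le_upper_anti.
- rewrite -[_ <=+ _](iota_cut_top a'_top ha' sa0).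
  by rewrite (iota_cut_top a_top ha sa0) /cut_below connect0.
- rewrite -[_ <=+ _](iota_cut_top a_top ha sa'0).
  by rewrite (iota_cut_top a'_top ha' sa'0) /cut_below connect0.
Qed.

Lemma iota_top_exists p : h p = Ia -> exists a, (a \in top1faces P) && (h a == Ia).
Proof.
move=> hp; have p_pos : 0 < dim p.
  by rewrite lt0n; apply/eqP => p0; move: (iota_vertex h_iota p0); rewrite hp eqxx.
have := iota_gamk1 h_iota p_pos; rewrite hp; move: (dim_gamk1 p_pos).
move: (gamk 1 p); apply: (strict_order_ind lt_upper_trans lt_upper_irrefl).
move=> e IH e1 he; have [/imsetP[b]|not_gam] := boolP (e \in gamS (faces_of P 2)).
  rewrite inE => /eqP b2 e_gb.
  have hb : h b = Ia by rewrite -(iota_gam h_iota) ?b2 // -e_gb.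
  have [_ _ /(_ 1 b b2)[_ to_vertex _]] := h_iota.
  have [|_ img] := to_vertex; first by rewrite dimI hb eqxx.
  have : Ia \in h @: (del b :\: ker h) by rewrite img hb set11.
  case/imsetP => e' /setDP[e'_b _] he'.
  have e'1 : dim e' = 1 by rewrite (dim_del _ e'_b) b2.
  apply: (IH e' _ e'1 (esym he')); rewrite e_gb; apply: tclos1.
  by apply/existsP; exists b; rewrite b2 e'_b eqxx.
by exists e; rewrite !inE e1 not_gam he !eqxx.
Qed.

End TopEdge.

Lemma surj_iota_to_I_bij :
  exists f : surj_iota_to_I -> {a : face P | a \in top1faces P}, bijective f.
Proof.
have top_of (H : surj_iota_to_I) : {a | (a \in top1faces P) && (sval H a == Ia)}.
  case: H => h [h_iota h_onto] /=; apply: sigW; have [p hp] := h_onto Ia.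
  exact: (iota_top_exists h_iota hp).
exists (fun H => exist _ (val (top_of H)) (proj1 (andP (valP (top_of H))))).
exists (fun t : {a | a \in top1faces P} =>
          exist _ (iota_below (val t)) (iota_below_onto (top1_dim (valP t)))).
- case=> h [h_iota h_onto]; apply: subset_eq_compat => /=.
  case: (top_of _) => a /= /andP[a_top /eqP ha].
  apply/ffunP => p; rewrite ffunE (iota_mapE h_iota p); apply: cut_map_ext => x x0.
  by rewrite (iota_cut_top h_iota a_top ha x0).
- case=> a a_top; apply: val_inj => /=.
  case: (top_of _) => a' /= /andP[a'_top /eqP ha'].
  have [below_iota _] := iota_below_onto (top1_dim a_top).
  apply: (iota_top_unique below_iota a'_top a_top ha').
  by rewrite ffunE cut_map_below_edge ?top1_dim.
Qed.

End Cardinal.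
End Hypergraph.

Theorem mainTheorem6 (P : hgraph) (HP : is_pos_opetope P) :
  exists f : {h : {ffun face P -> face Ihg} |
                is_iota_map h /\ (forall y : face Ihg, exists x, h x = y)} ->
             {a : face P | a \in top1faces P},
    bijective f.
Proof.
have [[hgP [_ [globP [irr total disj [gam_chain del_chain]]]]] _] := HP.
exact: surj_iota_to_I_bij.
Qed.
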